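(* Let $A$ be a Banach algebra with a left approximate identity and suppose there exists $\phi\in\Delta(A)$. Then the triangular Banach algebra $T=\begin{pmatrix}A&A\\0&A\end{pmatrix}$ is not approximately biprojective.
   Context: $\Delta(A)$ is the set of nonzero multiplicative linear functionals on $A$. $T$ consists of matrices $\begin{pmatrix}a&x\\0&b\end{pmatrix}$ with $a,x,b\in A$, with matrix operations and norm $\|a\|+\|x\|+\|b\|$. A Banach algebra $B$ is approximately biprojective if there is a net $(\rho_\alpha)$ of continuous $B$-bimodule morphisms $B\to B\otimes_pB$ with $\pi_B\circ\rho_\alpha(b)\to b$ for all $b\in B$, where $\pi_B(b\otimes c)=bc$. *)

From HB Require Import structures.
From mathcomp Require Import all_boot all_order all_algebra.
From mathcomp Require Import all_classical all_reals all_analysis.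
From mathcomp Require Import complex.
Set Implicit Arguments. Unset Strict Implicit. Unset Printing Implicit Defensive.
Import Order.TTheory GRing.Theory Num.Theory.
Local Open Scope ring_scope.

Section Defs.
Variable K : numFieldType.

Definition seq_conv (V : zmodType) (nrm : V -> K) (s : nat -> V) (l : V) : Prop :=
  forall e : K, 0 < e -> exists N : nat, forall n : nat, (N <= n)%N -> nrm (s n - l) < e.

Definition directed (I : Type) (le : I -> I -> Prop) : Prop :=
  [/\ inhabited I, (forall i, le i i), (forall i j k, le i j -> le j k -> le i k)
    & (forall i j, exists k, le i k /\ le j k)].

Variable V : lmodType K.
Variables (nrm : V -> K) (mul : V -> V -> V).

(** (nrm, mul) make V a normed (Banach) algebra's multiplication: bilinear,
    associative, submultiplicative. Completeness is imposed separately. *)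
Definition normed_alg_mul : Prop :=
  [/\ (forall (k : K) a b c, mul (k *: a + b) c = k *: mul a c + mul b c),
      (forall (k : K) a b c, mul a (k *: b + c) = k *: mul a b + mul a c),
      (forall a b c, mul a (mul b c) = mul (mul a b) c)
    & (forall a b, nrm (mul a b) <= nrm a * nrm b)].

(** Bounded bilinear forms V x V -> K: these are exactly the continuous
    linear functionals on the projective tensor product V (x)_p V. *)
Definition bounded_bilinear (f : V -> V -> K) : Prop :=
  [/\ (forall (k : K) a b c, f (k *: a + b) c = k * f a c + f b c),
      (forall (k : K) a b c, f a (k *: b + c) = k * f a b + f a c)
    & exists M : K, forall a b, `|f a b| <= M * nrm a * nrm b].

(** An element of V (x)_p V is represented by a sequence w of pairs with
    sum_n nrm (w n).1 * nrm (w n).2 < oo, standing for sum_n (w n).1 (x) (w n).2. *)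
Definition tsummable (w : nat -> V * V) : Prop :=
  exists S : K, forall N : nat, \sum_(n < N) nrm (w n).1 * nrm (w n).2 <= S.

(** A series with terms depending on a bounded bilinear form f sums to 0 for
    every f; used to express identities in V (x)_p V (two representations
    define the same element iff all continuous functionals agree). *)
Definition tens_zero (t : (V -> V -> K) -> nat -> K) : Prop :=
  forall f, bounded_bilinear f ->
    seq_conv (fun x : K => `|x|) (fun N => \sum_(n < N) t f n) 0.

Definition tequiv (w w' : nat -> V * V) : Prop :=
  tens_zero (fun f n => f (w n).1 (w n).2 - f (w' n).1 (w' n).2).

Definition tpi_to (w : nat -> V * V) (p : V) : Prop :=
  seq_conv nrm (fun N => \sum_(n < N) mul (w n).1 (w n).2) p.

(** rho : V -> V (x)_p V (given by choosing a representative for each rho b)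
    is a continuous (= bounded) V-bimodule morphism. *)
Definition cont_bimod_morph (rho : V -> nat -> V * V) : Prop :=
  [/\ (forall b, tsummable (rho b)),
      (forall (k : K) a b, tens_zero (fun f n =>
          f (rho (k *: a + b) n).1 (rho (k *: a + b) n).2
          - k * f (rho a n).1 (rho a n).2 - f (rho b n).1 (rho b n).2)),
      (* left module morphism: rho (a b) = a . rho b *)
      (forall a b, tens_zero (fun f n =>
          f (rho (mul a b) n).1 (rho (mul a b) n).2
          - f (mul a (rho b n).1) (rho b n).2)),
      (* right module morphism: rho (a b) = rho a . b *)
      (forall a b, tens_zero (fun f n =>
          f (rho (mul a b) n).1 (rho (mul a b) n).2
          - f (rho a n).1 (mul (rho a n).2 b)))
    & (* boundedness w.r.t. the projective norm (infimum over representations) *)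
      exists C : K, forall b (e : K), 0 < e ->
        exists w, tequiv (rho b) w /\
          forall N : nat, \sum_(n < N) nrm (w n).1 * nrm (w n).2 <= C * nrm b + e].

Definition approx_biprojective : Prop :=
  exists (I : Type) (le : I -> I -> Prop) (rho : I -> V -> nat -> V * V),
    [/\ directed le,
        (forall i, cont_bimod_morph (rho i))
      & forall b (e : K), 0 < e -> exists i0, forall i, le i0 i ->
          exists p, tpi_to (rho i b) p /\ nrm (p - b) < e].

Definition left_approx_identity : Prop :=
  exists (I : Type) (le : I -> I -> Prop) (u : I -> V),
    directed le /\
    forall a (e : K), 0 < e -> exists i0, forall i, le i0 i -> nrm (mul (u i) a - a) < e.

Definition character (phi : V -> K) : Prop :=
  [/\ (forall (k : K) a b, phi (k *: a + b) = k * phi a + phi b),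
      (forall a b, phi (mul a b) = phi a * phi b)
    & exists a, phi a != 0].

End Defs.

(** The triangular Banach algebra T = [[A, A], [0, A]], with elements
    ((a, x), b) standing for the matrix [[a, x], [0, b]]. *)
Section Triangular.
Variables (K : numFieldType) (A : normedModType K) (mul : A -> A -> A).

Definition tri_norm (t : (A * A) * A) : K := `|t.1.1| + `|t.1.2| + `|t.2|.

Definition tri_mul (s t : (A * A) * A) : (A * A) * A :=
  ((mul s.1.1 t.1.1, mul s.1.1 t.1.2 + mul s.1.2 t.2), mul s.2 t.2).
End Triangular.

From HB Require Import structures.
From mathcomp Require Import all_boot all_order all_algebra.
From mathcomp Require Import all_classical all_reals all_analysis.
From mathcomp Require Import complex.
Import Order.TTheory GRing.Theory Num.Theory numFieldNormedType.Exports.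
Local Open Scope ring_scope.
Local Open Scope classical_set_scope.
Set Implicit Arguments. Unset Strict Implicit.

(* A character phi of A is automatically bounded (a Neumann series argument), so
   f(s, t) = phi(s_11) phi(t_12) is a bounded bilinear form on T, i.e. a functional
   on T (x)_p T.  For a bimodule morphism rho and u = diag(c, 0), testing the left
   and right module identities of rho on u.E12(a).E22(a) against f shows that
   (phi (x) phi) of the (1,1)-entries of rho u vanishes.  But if pi (rho u) is close
   to u, the same quantity is phi((pi (rho u))_11), which is close to phi c = 1. *)

Section Linear.
Variables (K : numFieldType) (U V : lmodType K) (f : U -> V).
Hypothesis f_lin : forall (k : K) a b, f (k *: a + b) = k *: f a + f b.

Let fL : {linear U -> V} := HB.pack f (GRing.isLinear.Build _ _ _ _ f f_lin).

Lemma lin0 : f 0 = 0. Proof. exact: (raddf0 fL). Qed.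
Lemma linD a b : f (a + b) = f a + f b. Proof. exact: (raddfD fL). Qed.
Lemma linB a b : f (a - b) = f a - f b. Proof. exact: (raddfB fL). Qed.
Lemma linZ k a : f (k *: a) = k *: f a.
Proof. by rewrite -[k *: a]addr0 f_lin lin0 addr0. Qed.
Lemma lin_sum n (F : 'I_n -> U) : f (\sum_(i < n) F i) = \sum_(i < n) f (F i).
Proof. exact: (raddf_sum fL). Qed.

End Linear.

Lemma seq_convP (K : numFieldType) (V : normedModType K) (s : nat -> V) l :
  seq_conv (fun x : V => `|x|) s l <-> s @ \oo --> l.
Proof.
split=> [conv_s | /cvgrPdist_lt cvg_s e e0].
  apply/cvgrPdist_lt => e e0; have [N sN] := conv_s e e0.
  by exists N => // n /sN; rewrite distrC.
have [N _ sN] := cvg_s e e0.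
by exists N => n /sN /=; rewrite distrC.
Qed.

Lemma exists_halfpow_lt (R : realType) (e : R[i]) :
  0 < e -> exists n : nat, (2^-1 : R[i]) ^+ n < e.
Proof.
move=> e_gt0; have [r r_e] := complex_realP _ (gtr0_real e_gt0).
move: e_gt0; rewrite r_e ltcR => r_gt0.
have : (GRing.exp (2^-1 : R) : R ^nat) @ \oo --> 0.
  by apply: cvg_expr; rewrite ger0_norm ?invr_ge0 // invf_lt1 // ltr1n.
move=> /cvgrPdist_lt /(_ r r_gt0) [n _ /(_ n (leqnn n))].
rewrite /= sub0r normrN ger0_norm ?exprn_ge0 ?invr_ge0 // => small.
exists n; rewrite -ltcR in small; apply: le_lt_trans small.
by rewrite rmorphXn /= rmorphV ?unitfE ?pnatr_eq0 // rmorph_nat.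
Qed.

Lemma halfpow_cvg (R : realType) (A : completeNormedModType R[i]) (s : nat -> A) :
  (forall n, `|s n.+1 - s n| <= 2^-1 ^+ n.+1) -> cvg (s @ \oo).
Proof.
set h : R[i] := 2^-1 => s_step.
have tail n j : `|s (n + j)%N - s n| <= h ^+ n - h ^+ (n + j).
  elim: j => [|j IHj]; first by rewrite addn0 !subrr normr0.
  rewrite addnS -[s _ - _](subrKA (s (n + j)%N)).
  apply: le_trans (ler_normD _ _) _; apply: le_trans (lerD (s_step _) IHj) _.
  suff -> : h ^+ (n + j) = h ^+ (n + j).+1 + h ^+ (n + j).+1.
    by rewrite opprD addrCA addNKr.
  by rewrite -mulr2n exprS -mulr_natl mulrA mulfV ?pnatr_eq0 ?mul1r.
apply: cauchy_cvg; apply: cauchy_exP => e e0; rewrite -ball_normE.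
have [N hN] := exists_halfpow_lt e0.
exists (s N), N => // m /subnKC <-; rewrite /ball_ /= distrC.
apply: le_lt_trans (tail _ _) (le_lt_trans _ hN).
by rewrite lerBlDr lerDl exprn_ge0 // invr_ge0.
Qed.

Section Triangular.
Variables (K : numFieldType) (A : normedModType K) (mul : A -> A -> A).
Hypothesis alg : normed_alg_mul (fun a : A => `|a|) mul.
Variable phi : A -> K.
Hypothesis chi : character mul phi.
Variable M : K.
Hypothesis phi_le : forall x, `|phi x| <= M * `|x|.

Local Notation T := ((A * A) * A)%type.

Lemma tri_norm_ge11 (t : T) : `|t.1.1| <= tri_norm t.
Proof. by rewrite /tri_norm -addrA lerDl addr_ge0. Qed.

Lemma tri_norm_ge12 (t : T) : `|t.1.2| <= tri_norm t.
Proof. by rewrite /tri_norm addrAC lerDr addr_ge0. Qed.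

Lemma tri_mulA (s t r : T) :
  tri_mul mul (tri_mul mul s t) r = tri_mul mul s (tri_mul mul t r).
Proof.
case: alg => mulDl mulDr mulA _; rewrite /tri_mul /=.
by rewrite (linD (fun k a b => mulDl k a b _)) (linD (fun k => mulDr k _)) !mulA addrA.
Qed.

Lemma character_unit_value : exists c, phi c = 1.
Proof.
case: chi => phi_lin _ [a phi_a]; exists ((phi a)^-1 *: a).
by rewrite (linZ (V:=K^o) phi_lin) [_ *: _]mulVf.
Qed.

Lemma bound_gt0 : 0 < M.
Proof.
case: chi => phi_lin _ [a phi_a].
have a_gt0 : 0 < `|a|.
  rewrite normr_gt0; apply: contraNneq phi_a => ->.
  by rewrite (lin0 (V:=K^o) phi_lin).
rewrite -(pmulr_lgt0 _ a_gt0); apply: lt_le_trans (phi_le a).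
by rewrite normr_gt0.
Qed.

Lemma character_cvg (s : nat -> A) l :
  s @ \oo --> l -> phi (s n) @[n --> \oo] --> phi l.
Proof.
case: chi => phi_lin _ _ /cvgrPdist_lt s_l; apply/cvgrPdist_lt => e e0.
apply: filterS (s_l _ (divr_gt0 e0 bound_gt0)) => n /= dist_n.
rewrite -(linB (V:=K^o) phi_lin); apply: le_lt_trans (phi_le _) _.
by rewrite -ltr_pdivlMl ?bound_gt0 // mulrC.
Qed.

Definition corner_form (s t : T) : K := phi s.1.1 * phi t.1.2.

Lemma corner_form_bounded : bounded_bilinear (tri_norm (A:=A)) corner_form.
Proof.
case: chi => phi_lin _ _; split.
- by move=> k a b c; rewrite /corner_form /= phi_lin mulrDl mulrA.
- by move=> k a b c; rewrite /corner_form /= phi_lin mulrDr mulrCA.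
exists (M * M) => s t; rewrite /corner_form normrM.
have -> : M * M * tri_norm s * tri_norm t = (M * tri_norm s) * (M * tri_norm t).
  by rewrite mulrACA mulrA.
have M_ge0 := ltW bound_gt0.
apply: ler_pM; rewrite ?normr_ge0 //; apply: le_trans (phi_le _) _.
  exact: ler_wpM2l (tri_norm_ge11 _).
exact: ler_wpM2l (tri_norm_ge12 _).
Qed.

Lemma corner_form_mull (r s t : T) :
  corner_form (tri_mul mul r s) t = phi r.1.1 * corner_form s t.
Proof. by case: chi => _ phiM _; rewrite /corner_form /= phiM mulrA. Qed.

Lemma corner_form_mulr (s t r : T) :
  corner_form s (tri_mul mul t r)
  = phi s.1.1 * (phi t.1.1 * phi r.1.2 + phi t.1.2 * phi r.2).
Proof.
by case: chi => phi_lin phiM _; rewrite /corner_form /= (linD (V:=K^o) phi_lin) !phiM.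
Qed.

Lemma tens_zero_cvg (t : (T -> T -> K) -> nat -> K) f (L : nat -> K) :
  tens_zero (tri_norm (A:=A)) t -> bounded_bilinear (tri_norm (A:=A)) f ->
  (forall N, \sum_(n < N) t f n = L N) -> L @ \oo --> 0.
Proof.
move=> t0 f_bdd sum_t; have := t0 f f_bdd.
by rewrite seq_convP (eq_cvg _ _ sum_t).
Qed.

(* Test both module identities of rho against corner_form on u v d, with
   v = E12(a) and d = E22(a): on the left the (1,1) entry of u v is 0, on the
   right the (1,2) entry of v d is a^2 <> 0. *)
Lemma bimod_morph_corner_vanish rho c :
  cont_bimod_morph (tri_norm (A:=A)) (tri_mul mul) rho ->
  \sum_(n < N) phi (rho ((c, 0), 0) n).1.1.1 * phi (rho ((c, 0), 0) n).2.1.1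
    @[N --> \oo] --> 0.
Proof.
case: chi => phi_lin phiM [a phi_a] [_ _ rho_l rho_r _].
have phi0 : phi 0 = 0 := lin0 (V:=K^o) phi_lin.
set u : T := ((c, 0), 0); pose v : T := ((0, a), 0); pose d : T := ((0, 0), a).
pose B := tri_mul mul v d; pose q := phi B.1.2.
pose S N := \sum_(n < N) phi (rho u n).1.1.1 * phi (rho u n).2.1.1.
pose z := rho (tri_mul mul u B).
pose L N := \sum_(n < N) corner_form (z n).1 (z n).2.
have q0 : q != 0.
  by rewrite /q /= (linD (V:=K^o) phi_lin) !phiM phi0 mul0r add0r mulf_neq0.
have L_cvg : L @ \oo --> 0.
  apply: (tens_zero_cvg (rho_l (tri_mul mul u v) d) corner_form_bounded) => N.
  apply: eq_bigr => n _; rewrite corner_form_mull /= phiM phi0 mulr0 mul0r subr0.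
  by rewrite tri_mulA.
have LS_cvg : L N - S N * q @[N --> \oo] --> 0.
  apply: (tens_zero_cvg (rho_r u B) corner_form_bounded) => N.
  rewrite /L /S mulr_suml -sumrB; apply: eq_bigr => n _.
  by rewrite corner_form_mulr /= phiM phi0 mul0r mulr0 addr0 mulrA.
change (S @ \oo --> 0).
have -> : S = fun N => (L N - (L N - S N * q)) * q^-1.
  by apply/funext => N; rewrite opprB addrC subrK mulfK.
rewrite -[X in _ --> X](mul0r q^-1) -[X in X * _](subrr 0).
exact: cvgM (cvgB L_cvg LS_cvg) (cvg_cst _).
Qed.

Lemma tpi_to_corner_cvg (w : nat -> T * T) p :
  tpi_to (tri_norm (A:=A)) (tri_mul mul) w p ->
  \sum_(n < N) phi (w n).1.1.1 * phi (w n).2.1.1 @[N --> \oo] --> phi p.1.1.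
Proof.
case: chi => phi_lin phiM _ pi_w.
pose P N := \sum_(n < N) tri_mul mul (w n).1 (w n).2.
have P11_cvg : (P N).1.1 @[N --> \oo] --> p.1.1.
  apply/cvgrPdist_lt => e e0; have [N PN] := pi_w e e0.
  exists N => // n /PN; rewrite distrC; exact: le_lt_trans (tri_norm_ge11 _).
have -> : (fun N => \sum_(n < N) phi (w n).1.1.1 * phi (w n).2.1.1)
          = fun N => phi (P N).1.1.
  apply/funext => N.
  rewrite /P (big_morph (fun t : T => t.1.1) (id1 := 0) (op1 := +%R)) //.
  by rewrite (lin_sum (V:=K^o) phi_lin); apply: eq_bigr => n _; rewrite phiM.
exact: character_cvg P11_cvg.
Qed.


Theorem tri_not_approx_biprojective :
  ~ approx_biprojective (tri_norm (A:=A)) (tri_mul mul).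
Proof.
case=> I [le [rho [[_ le_refl _ _] rho_morph rho_approx]]].
have [c phi_c] := character_unit_value; pose u : T := ((c, 0), 0).
have Minv_gt0 : 0 < M^-1 by rewrite invr_gt0 bound_gt0.
have [i near_u] := rho_approx u _ Minv_gt0.
have [p [pi_p p_u]] := near_u i (le_refl i).
have phi_p : phi p.1.1 = 0.
  have corner_vanish := bimod_morph_corner_vanish c (rho_morph i).
  apply: cvg_unique (tpi_to_corner_cvg pi_p) corner_vanish.
  exact: norm_hausdorff.
have : `|phi (p - u).1.1| < 1.
  apply: le_lt_trans (phi_le _) _; rewrite -(mulfV (lt0r_neq0 bound_gt0)).
  by rewrite ltr_pM2l ?bound_gt0 //; apply: le_lt_trans (tri_norm_ge11 _) p_u.
case: chi => phi_lin _ _.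
by rewrite (linB (V:=K^o) phi_lin) /= phi_p phi_c sub0r normrN normr1 ltxx.
Qed.

End Triangular.

Section BanachAlgebra.
Variables (R : realType) (A : completeNormedModType R[i]) (mul : A -> A -> A).
Hypothesis alg : normed_alg_mul (fun a : A => `|a|) mul.

Lemma quasi_inverse_exists (a : A) : `|a| <= 2^-1 -> exists b, b = a + mul a b.
Proof.
case: alg => _ mulD _ mul_le a_small.
have mul_a_lin k := mulD k a.
have mulB x y : mul a x - mul a y = mul a (x - y) by rewrite (linB mul_a_lin).
pose s n := iter n (fun y => a + mul a y) 0.
have s_step n : `|s n.+1 - s n| <= 2^-1 ^+ n.+1.
  elim: n => [|n IHn]; first by rewrite /s /= subr0 (lin0 mul_a_lin) addr0.
  rewrite [s n.+2]/= [s n.+1]/= opprD addrACA subrr add0r mulB exprS.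
  exact: le_trans (mul_le _ _) (ler_pM _ _ a_small IHn).
have /cvg_ex[b s_b] := halfpow_cvg s_step.
have sS_b : (fun n => s n.+1) @ \oo --> b by rewrite cvg_shiftS.
exists b; apply: cvg_unique sS_b _; first exact: norm_hausdorff.
apply/cvgrPdist_lt => e e0.
move/cvgrPdist_lt: s_b => /(_ e e0); apply: filterS => n /= b_sn.
rewrite opprD addrACA subrr add0r mulB.
apply: le_lt_trans (mul_le _ _) (le_lt_trans _ b_sn).
rewrite -[X in _ <= X]mul1r ler_wpM2r //; apply: le_trans a_small _.
by rewrite invf_le1 // ler1n.
Qed.

Variable phi : A -> R[i].
Hypothesis chi : character mul phi.

(* The constant 2 instead of the optimal 1 keeps the quasi-inverse series
   geometric of ratio 1/2. *)
Lemma character_bounded x : `|phi x| <= 2 * `|x|.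
Proof.
case: chi => phi_lin phiM _; rewrite real_leNgt ?realM ?normr_real //.
apply/negP => phi_x_big.
have phi_x0 : phi x != 0.
  by apply: contraTneq phi_x_big => ->; rewrite normr0 le_gtF ?mulr_ge0.
pose a := (phi x)^-1 *: x.
have phi_a : phi a = 1 by rewrite (linZ (V:=R[i]^o) phi_lin) [_ *: _]mulVf.
have a_small : `|a| <= 2^-1.
  rewrite normrZ normfV ler_pdivrMl ?normr_gt0 // ler_pdivlMr // mulrC.
  exact: ltW.
have [b b_fix] := quasi_inverse_exists a_small.
have := congr1 phi b_fix; rewrite (linD (V:=R[i]^o) phi_lin) phiM phi_a mul1r.
by move/eqP; rewrite -subr_eq subrr eq_sym oner_eq0.
Qed.

End BanachAlgebra.

Theorem mainTheorem7 (R : realType) (A : completeNormedModType R[i])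
    (mul : A -> A -> A) (phi : A -> R[i]) :
  normed_alg_mul (fun a : A => `|a|) mul ->
  left_approx_identity (fun a : A => `|a|) mul ->
  character mul phi ->
  ~ approx_biprojective (tri_norm (A:=A)) (tri_mul mul).
Proof.
move=> alg _ chi.
exact: (tri_not_approx_biprojective alg chi (character_bounded alg chi)).
Qed.
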